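(* Let $p\ge19$ be prime and $n\ge10^6$, and let $r(p,n)$ be the maximum size of a subset of $\mathbb{F}_p^n$ containing no nontrivial three-term arithmetic progression (no $x,x+d,x+2d$ all in the set with $d\ne0$). Then $r(p,n)\ge p^{0.782n}$ and $r(p,n)\ge\big((p+1)/2.0001\big)^{n-2}$. *)

From HB Require Import structures.
From Stdlib Require Import Reals.
From mathcomp Require Import all_boot all_order all_algebra.
Set Implicit Arguments. Unset Strict Implicit. Unset Printing Implicit Defensive.
Import GRing.Theory.

Definition ap3_freeb (p n : nat) (A : {set 'rV['F_p]_n}) : bool :=
  [forall x : 'rV['F_p]_n, forall d : 'rV['F_p]_n,
     (d != 0%R) ==> ~~ [&& x \in A, (x + d)%R \in A & (x + d *+ 2)%R \in A]].

Definition r3 (p n : nat) : nat :=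
  \max_(A : {set 'rV['F_p]_n} | ap3_freeb A) #|A|.

From Stdlib Require Import Reals Lra.
From mathcomp Require Import all_boot all_order all_algebra zify.
Set Implicit Arguments. Unset Strict Implicit. Unset Printing Implicit Defensive.
Import GRing.Theory.

(* The box {0,...,h}^n with h = (p-1)/2 embeds in F_p^n without wrap-around,
   so a 3-term progression x, x+d, x+2d inside its image is an integer
   progression. By the parallelogram law 2|x|^2 + 2|z|^2 = |x+z|^2 + |x-z|^2,
   a sphere |x|^2 = k of the box contains no such progression with d <> 0, and
   by pigeonhole one of the n h^2 + 1 spheres has at least (h+1)^n/(n h^2 + 1)
   points. Both bounds then follow from ((p+1)/2)^n <= n ((p+1)/2)^2 r(p,n) and
   the fact that a geometric sequence eventually dominates a linear one, made
   explicit for n >= 10^6. *)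

Lemma card_le_r3 p n (A : {set 'rV['F_p]_n}) : ap3_freeb A -> #|A| <= r3 p n.
Proof. exact: (@leq_bigmax_cond _ (@ap3_freeb p n) (fun A => #|A|)). Qed.

(* With truncated subtraction, [a - c + (c - a)] is the distance |a - c|. *)
Lemma parallelogram_nat a b c : a + c = b.*2 ->
  2 * (a ^ 2 + c ^ 2) = 4 * b ^ 2 + (a - c + (c - a)) ^ 2.
Proof.
move=> abc; case: (leqP a c) => ac.
- by rewrite (_ : a - c = 0); nia.
- by rewrite (_ : c - a = 0); nia.
Qed.

Section SphereConstruction.
Variables (p n h : nat).
Hypothesis p_prime : prime p.
Hypothesis hh_lt_p : h + h < p.

Lemma Fp_natr_inj a b : a < p -> b < p -> (a%:R = b%:R :> 'F_p)%R -> a = b.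
Proof. by move=> ap bp /(congr1 val); rewrite /= !val_Fp_nat // !modn_small. Qed.

Definition box_vec (f : {ffun 'I_n -> 'I_h.+1}) : 'rV['F_p]_n := \row_i ((f i : nat)%:R)%R.

Definition sqnorm (f : {ffun 'I_n -> 'I_h.+1}) := \sum_i (f i : nat) ^ 2.

Lemma box_lt_p (a : 'I_h.+1) : a < p.
Proof. have := ltn_ord a; lia. Qed.

Lemma box_vec_inj : injective box_vec.
Proof.
move=> f g /matrixP fg; apply/ffunP => i; apply/val_inj.
by apply: Fp_natr_inj; rewrite ?box_lt_p //; have := fg ord0 i; rewrite !mxE.
Qed.

(* No wrap-around: both sides are below [h + h < p]. *)
Lemma box_vec_midpoint f g e : (box_vec f + box_vec e = box_vec g *+ 2)%R ->
  forall i, f i + e i = (g i).*2.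
Proof.
move=> /matrixP fge i; have := fge ord0 i; rewrite mulmxnE !mxE mulr2n -!natrD -addnn.
have := ltn_ord (f i); have := ltn_ord (g i); have := ltn_ord (e i).
by move=> ? ? ?; apply: Fp_natr_inj; lia.
Qed.

Definition sphere k := [set f | sqnorm f == k].

Lemma ap3_free_sphere k : ap3_freeb (box_vec @: sphere k).
Proof.
apply/forallP => x; apply/forallP => d; apply/implyP => d_neq0.
apply/and3P => -[/imsetP[f f_k ->] /imsetP[g g_k g_x] /imsetP[e e_k e_x]].
have mid i : f i + e i = (g i).*2.
  by apply: box_vec_midpoint; rewrite -e_x -g_x mulrnDl addrA mulr2n.
have : \sum_i 2 * ((f i : nat) ^ 2 + (e i : nat) ^ 2) =
       \sum_i 4 * (g i : nat) ^ 2 + \sum_i (f i - e i + (e i - f i)) ^ 2.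
  by rewrite -big_split; apply: eq_bigr => i _; apply: parallelogram_nat.
rewrite -!big_distrr big_split -/(sqnorm f) -/(sqnorm g) -/(sqnorm e).
move: f_k g_k e_k; rewrite !inE => /eqP-> /eqP-> /eqP-> sum_dist.
have /eqP : \sum_i (f i - e i + (e i - f i)) ^ 2 = 0 by move: sum_dist => /=; lia.
rewrite sum_nat_eq0 => /forallP dist0.
have fg : f = g.
  apply/ffunP => i; apply/val_inj/double_inj; rewrite -mid.
  by have := dist0 i; rewrite expn_eq0 /=; lia.
move/eqP: d_neq0; apply; apply: (addrI (box_vec f)).
by rewrite addr0 g_x fg.
Qed.

Lemma sqnorm_le f : sqnorm f <= n * h ^ 2.
Proof.
rewrite -[n in n * _]card_ord -sum_nat_const.
by apply: leq_sum => i _; rewrite leq_exp2r // -ltnS.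
Qed.

Lemma box_card_le_r3 : h.+1 ^ n <= (n * h ^ 2).+1 * r3 p n.
Proof.
pose N := (n * h ^ 2).+1.
have -> : h.+1 ^ n = \sum_(f : {ffun 'I_n -> 'I_h.+1}) 1.
  by rewrite sum1_card card_ffun !card_ord.
rewrite (partition_big (fun f => inord (sqnorm f) : 'I_N) predT) //=.
rewrite -[X in _ <= X * _]card_ord -sum_nat_const; apply: leq_sum => k _.
rewrite sum1dep_card.
have -> : #|[set f | inord (sqnorm f) == k :> 'I_N]| = #|box_vec @: sphere k|.
  rewrite card_imset; last exact: box_vec_inj.
  by apply: eq_card => f; rewrite !inE -(inj_eq val_inj) /= inordK // ltnS sqnorm_le.
exact/card_le_r3/ap3_free_sphere.
Qed.

Lemma r3_ge_pow : (0 < n)%N -> h.+1 ^ n <= n * h.+1 ^ 2 * r3 p n.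
Proof. by move=> n_gt0; apply: leq_trans box_card_le_r3 _; apply: leq_mul => //; nia. Qed.

End SphereConstruction.

Lemma prime_ge19_cases p : prime p -> (19 <= p)%N ->
  [\/ p = 19, p = 23 | (29 <= p)%N].
Proof.
move=> p_prime p_ge19; case: (ltnP p 29) => [p_lt29 | ]; last by constructor 3.
have small : all (fun q => prime q ==> (q == 19) || (q == 23)) (iota 19 10) by [].
have := allP small p; rewrite mem_iota p_prime.
by case/(_ _)/orP => [|/eqP-> | /eqP->]; [lia | constructor 1 | constructor 2].
Qed.

Lemma doubleS_half_pred p : odd p -> (p.-1./2).+1.*2 = p.+1.
Proof.
case: p => // p p_even; rewrite /= in p_even.
by have := odd_double_half p; rewrite (negPf p_even); lia.
Qed.

Local Open Scope R_scope.

Lemma INR_muln a b : INR (a * b)%N = INR a * INR b.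
Proof. exact: mult_INR. Qed.

Lemma INR_expn a k : INR (a ^ k)%N = INR a ^ k.
Proof. by elim: k => // k IH; rewrite expnS INR_muln IH. Qed.

Lemma two_le_pow_succ_inv (L : nat) : (0 < L)%N -> 2 <= (1 + / INR L) ^ L.
Proof.
move=> L_gt0; have L_pos : 0 < INR L by apply/lt_0_INR/ltP.
have := Rfunctions.poly L (/ INR L) (Rinv_0_lt_compat _ L_pos).
by rewrite Rinv_r; lra.
Qed.

Lemma linear_le_pow2_shift (K : R) (q j : nat) : 0 <= K ->
  K * (INR q + 1) <= 2 ^ q -> K * (INR (q + j) + 1) <= 2 ^ (q + j).
Proof.
move=> K_ge0 base; elim: j => [|j IH]; first by rewrite addn0.
by rewrite addnS S_INR /=; have := pos_INR (q + j); nra.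
Qed.

Lemma linear_le_pow (rho K : R) (L q n : nat) :
  0 <= rho -> 2 <= rho ^ L -> 0 <= K -> K * (INR q + 1) <= 2 ^ q ->
  (q * L <= n)%N -> K * INR n <= INR L * rho ^ n.
Proof.
move=> rho_ge0 two_le K_ge0 base qL_le.
have L_gt0 : (0 < L)%N by case: L two_le qL_le => //= two_le1 _; lra.
have rho_ge1 : 1 <= rho.
  apply: Rnot_lt_le => rho_lt1.
  by have [] := pow_lt_1_compat rho L (conj rho_ge0 rho_lt1) (elimT ltP L_gt0); lra.
set k := (n %/ L)%N.
have q_le_k : (q <= k)%N by rewrite leq_divRL.
have grow : K * (INR k + 1) <= 2 ^ k.
  by rewrite -(subnKC q_le_k); apply: linear_le_pow2_shift.
have n_le : INR n <= INR L * (INR k + 1).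
  rewrite -S_INR -mult_INR; apply/le_INR/leP.
  by rewrite (divn_eq n L) -/k; have := ltn_pmod n L_gt0; lia.
have two_pow_le : 2 ^ k <= rho ^ n.
  apply: Rle_trans (_ : (rho ^ L) ^ k <= _); first by apply: pow_incr; lra.
  by rewrite -pow_mult; apply: Rle_pow => //; apply/leP; have := leq_trunc_div n L; lia.
have := pos_INR n; have := pos_INR L; nra.
Qed.

Lemma IZR_le_leb (x y : Z) : Z.leb x y = true -> IZR x <= IZR y.
Proof. by move/Z.leb_le; apply: IZR_le. Qed.

Ltac num_le := rewrite ?INR_IZR_INZ ?pow_IZR;
  repeat (rewrite -plus_IZR || rewrite -mult_IZR);
  apply: IZR_le_leb; vm_compute; reflexivity.

Lemma INR_le_pow_101 (n : nat) : (10 ^ 6 <= n)%N -> INR n <= (1 + / 100) ^ n.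
Proof.
move=> n_large; have INR100 : INR 100 = 100 by rewrite INR_IZR_INZ.
have two_le : 2 <= (1 + / 100) ^ 100.
  by have := @two_le_pow_succ_inv 100 isT; rewrite INR100.
have base : 100 * (INR 11 + 1) <= 2 ^ 11 by num_le.
suff : 100 * INR n <= INR 100 * (1 + / 100) ^ n by rewrite INR100; lra.
by apply: linear_le_pow two_le _ base _; [lra | lra | lia].
Qed.

Lemma INR_le_pow_20001 (n : nat) : (10 ^ 6 <= n)%N ->
  INR n <= (1 + / 20000) ^ (n - 2).
Proof.
move=> n_large; set k := (n - 2)%N.
(* [20000] is written as a product: nat literals beyond 5000 are opaque to [lia]. *)
pose L := (200 * 100)%N; have INR_L : INR L = 20000 by rewrite INR_IZR_INZ.
have two_le : 2 <= (1 + / 20000) ^ L.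
  by have := @two_le_pow_succ_inv L isT; rewrite INR_L.
have base : 20001 * (INR 19 + 1) <= 2 ^ 19 by num_le.
have : 20001 * INR k <= INR L * (1 + / 20000) ^ k.
  by apply: linear_le_pow two_le _ base _; [lra | lra | rewrite /k /L; lia].
have k_large : 40000 <= INR k.
  rewrite (_ : 40000 = INR (20 * 2000)); last by rewrite INR_IZR_INZ.
  by apply/le_INR/leP; rewrite /k; lia.
have -> : INR n = INR k + 2 by rewrite -[2]/(INR 2) -plus_INR; congr INR; rewrite /k; lia.
by rewrite INR_L; lra.
Qed.

Definition pow782 (x : R) := Rpower x (782 / 1000).

Lemma pow782_pow500 x : 0 < x -> pow782 x ^ 500 = x ^ 391.
Proof.
move=> x_pos; rewrite /pow782 -(Rpower_pow 500); last exact: exp_pos.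
rewrite Rpower_mult -Rpower_pow // !INR_IZR_INZ; congr Rpower; simpl; lra.
Qed.

(* Since 782/1000 * 500 = 391, the hypothesis [ratio] says that
   [(M / P^0.782)^500 >= 1 + 1/j], and [(1 + 1/j)^j >= 2]. *)
Lemma small_prime_growth (P M j q n : nat) : (0 < P)%N -> (0 < j)%N ->
  INR j.+1 * INR P ^ 391 <= INR j * INR M ^ 500 ->
  INR (500 * j) * INR M ^ 2 * (INR q + 1) <= 2 ^ q -> (q * (500 * j) <= n)%N ->
  INR n * INR M ^ 2 <= (INR M / pow782 (INR P)) ^ n.
Proof.
move=> P_gt0 j_gt0 ratio base qL_le.
have P_pos : 0 < INR P by apply/lt_0_INR/ltP.
have j_pos : 0 < INR j by apply/lt_0_INR/ltP.
have P391_pos : 0 < INR P ^ 391 by apply: pow_lt.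
have X_pos : 0 < pow782 (INR P) by apply: exp_pos.
set rho := INR M / pow782 (INR P).
have rho_ge0 : 0 <= rho.
  by apply: Rmult_le_pos; [apply: pos_INR | apply/Rlt_le/Rinv_0_lt_compat].
have rho500 : 1 + / INR j <= rho ^ 500.
  rewrite /rho /Rdiv Rpow_mult_distr pow_inv pow782_pow500 //.
  apply: (Rmult_le_reg_r (INR j * INR P ^ 391)); first nra.
  have -> : (1 + / INR j) * (INR j * INR P ^ 391) = INR j.+1 * INR P ^ 391.
    by rewrite S_INR; field; lra.
  have -> : INR M ^ 500 * / INR P ^ 391 * (INR j * INR P ^ 391) = INR j * INR M ^ 500.
    by field; lra.
  exact: ratio.
have two_le : 2 <= rho ^ (500 * j).
  rewrite pow_mult; apply: Rle_trans (two_le_pow_succ_inv j_gt0) _.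
  by apply: pow_incr; have := Rinv_0_lt_compat _ j_pos; lra.
have L_pos : 0 < INR (500 * j) by apply/lt_0_INR/ltP; rewrite muln_gt0 j_gt0.
have K_ge0 := Rmult_le_pos _ _ (Rlt_le _ _ L_pos) (pow2_ge_0 (INR M)).
have := linear_le_pow rho_ge0 two_le K_ge0 base qL_le.
by move=> growth; apply: (Rmult_le_reg_l _ _ _ L_pos); lra.
Qed.

Lemma le_Rpower_of_pow_le (a x : R) (k l : nat) : 0 < a -> 0 < x -> (0 < k)%N ->
  a ^ k <= x ^ l -> a <= Rpower x (INR l / INR k).
Proof.
move=> a_pos x_pos k_gt0 le_pow.
have k_pos : 0 < INR k by apply/lt_0_INR/ltP.
have a_root : Rpower (a ^ k) (/ INR k) = a.
  by rewrite -Rpower_pow // Rpower_mult Rinv_r ?Rpower_1 //; lra.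
rewrite -a_root /Rdiv -Rpower_mult Rpower_pow //.
apply: Rle_Rpower_l; first by have := Rinv_0_lt_compat _ k_pos; lra.
by split; first exact: pow_lt.
Qed.

Lemma Rpower_21_100_ge (P : nat) : (29 <= P)%N ->
  2 * (1 + / 100) <= Rpower (INR P) (21 / 100).
Proof.
move=> P_ge29; have P_ge : INR 29 <= INR P by apply/le_INR/leP.
have INR29_pos : 0 < INR 29 by apply/lt_0_INR/ltP.
have -> : 21 / 100 = INR 21 / INR 100 by rewrite !INR_IZR_INZ.
apply: Rle_trans (_ : Rpower (INR 29) (INR 21 / INR 100) <= _); last first.
  apply: Rle_Rpower_l => //; apply: Rmult_le_pos; first exact: pos_INR.
  by apply/Rlt_le/Rinv_0_lt_compat/lt_0_INR/ltP.
apply: le_Rpower_of_pow_le => //; first lra.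
have -> : 2 * (1 + / 100) = 202 * / 100 by field.
rewrite Rpow_mult_distr pow_inv.
have pow100_pos : 0 < 100 ^ 100 by apply: pow_lt; lra.
apply: (Rmult_le_reg_r _ _ _ pow100_pos); rewrite Rmult_assoc Rinv_l; last lra.
rewrite Rmult_1_r; num_le.
Qed.

(* Split [P = P^0.782 * P^0.008 * P^0.21]: the last factor beats 2.02, so
   [m / P^0.782 >= 1.01 * P^0.008], and [1.01^n >= n], [P^(0.008 n) >= P^2]. *)
Lemma large_prime_growth (P n : nat) (m : R) : (29 <= P)%N ->
  INR P / 2 <= m <= INR P -> (10 ^ 6 <= n)%N ->
  INR n * m ^ 2 <= (m / pow782 (INR P)) ^ n.
Proof.
move=> P_ge29 [m_lb m_ub] n_large.
have P_ge1 : 1 <= INR P by apply/(le_INR 1)/leP/(leq_trans _ P_ge29).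
set X := pow782 (INR P); set Y := Rpower (INR P) (8 / 1000).
have X_pos : 0 < X by apply: exp_pos.
have Y_pos : 0 < Y by apply: exp_pos.
have P_XYZ : INR P = X * Y * Rpower (INR P) (21 / 100).
  rewrite /X /Y /pow782 -!Rpower_plus (_ : _ + _ + _ = 1) ?Rpower_1 //; lra.
have := Rpower_21_100_ge P_ge29 => Z_ge.
have rho_ge : (1 + / 100) * Y <= m / X.
  apply: (Rmult_le_reg_r X) => //; rewrite /Rdiv (Rmult_assoc m) Rinv_l; last lra.
  have XY_pos : 0 < X * Y by apply: Rmult_lt_0_compat.
  nra.
have P2_le : INR P ^ 2 <= Y ^ n.
  rewrite /Y -Rpower_pow; last lra.
  rewrite -Rpower_pow ?Rpower_mult; last exact: exp_pos.
  apply: Rle_Rpower => //.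
  have n_ge : 1000000 <= INR n.
    rewrite (_ : 1000000 = INR (1000 * 1000)); last by rewrite INR_IZR_INZ.
    by apply/le_INR/leP; lia.
  rewrite [INR 2]/=; lra.
have n_le := INR_le_pow_101 n_large.
have rho_pow : ((1 + / 100) * Y) ^ n <= (m / X) ^ n.
  by apply: pow_incr; split => //; apply: Rmult_le_pos; lra.
rewrite Rpow_mult_distr in rho_pow.
have m2_le : m ^ 2 <= INR P ^ 2 by apply: pow_incr; lra.
have := pos_INR n; have := pow_le (1 + / 100) n ltac:(lra); nra.
Qed.

Lemma Rpower782_le_of_growth (P n : nat) (m r : R) : 0 < m ->
  INR n * m ^ 2 <= (m / pow782 (INR P)) ^ n -> m ^ n <= INR n * m ^ 2 * r ->
  Rpower (INR P) (782 / 1000 * INR n) <= r.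
Proof.
move=> m_pos growth bound.
have X_pos : 0 < pow782 (INR P) by apply: exp_pos.
rewrite -Rpower_mult Rpower_pow // -/(pow782 (INR P)).
have Xn_pos : 0 < pow782 (INR P) ^ n by apply: pow_lt.
have mn_pos : 0 < m ^ n by apply: pow_lt.
rewrite /Rdiv Rpow_mult_distr pow_inv in growth.
have {}growth : INR n * m ^ 2 * pow782 (INR P) ^ n <= m ^ n.
  apply: Rle_trans (Rmult_le_compat_r _ _ _ (Rlt_le _ _ Xn_pos) growth) _.
  by rewrite Rmult_assoc Rinv_l; lra.
have c_pos : 0 < INR n * m ^ 2.
  have c_ge0 := Rmult_le_pos _ _ (pos_INR n) (pow2_ge_0 m).
  apply: Rnot_le_lt => c_le0; have c0 : INR n * m ^ 2 = 0 by lra.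
  by rewrite c0 Rmult_0_l in bound; lra.
nra.
Qed.

Lemma pow_20001_le_of_growth (P n : nat) (m r : R) : INR P + 1 = 2 * m -> 0 < m ->
  (10 ^ 6 <= n)%N -> m ^ n <= INR n * m ^ 2 * r ->
  ((INR P + 1) / (20001 / 10000)) ^ (n - 2) <= r.
Proof.
move=> Pm m_pos n_large bound.
have n_le := INR_le_pow_20001 n_large; set k := (n - 2)%N in n_le *.
set rho := 1 + / 20000 in n_le.
have -> : (INR P + 1) / (20001 / 10000) = m / rho by rewrite Pm /rho; field.
have rhok_pos : 0 < rho ^ k by apply: pow_lt; rewrite /rho; lra.
have m2_pos : 0 < m ^ 2 by apply: pow_lt.
have mk_pos : 0 < m ^ k by apply: pow_lt.
have mk_le : m ^ k <= INR n * r.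
  apply: (Rmult_le_reg_r _ _ _ m2_pos); rewrite -pow_add.
  by rewrite (_ : (k + 2)%coq_nat = n) /k; [nra | lia].
rewrite /Rdiv Rpow_mult_distr pow_inv.
apply: (Rmult_le_reg_r _ _ _ rhok_pos); rewrite Rmult_assoc Rinv_l; last lra.
have r_ge0 : 0 <= r.
  apply: Rnot_lt_le => r_lt0.
  by have := Rmult_le_compat_l _ _ _ (pos_INR n) (Rlt_le _ _ r_lt0); lra.
rewrite Rmult_1_r; apply: Rle_trans mk_le _.
by rewrite Rmult_comm; apply: Rmult_le_compat_l.
Qed.

Lemma INR_half_pred_succ p : odd p -> 2 * INR (p.-1./2).+1 = INR p + 1.
Proof.
move/doubleS_half_pred; rewrite -S_INR => <-.
by rewrite -muln2 INR_muln [INR 2]/=; lra.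
Qed.

Lemma prime_growth (P n : nat) : prime P -> (19 <= P)%N -> (10 ^ 6 <= n)%N ->
  INR n * INR (P.-1./2).+1 ^ 2 <= (INR (P.-1./2).+1 / pow782 (INR P)) ^ n.
Proof.
move=> P_prime P_ge19 n_large.
case: (prime_ge19_cases P_prime P_ge19) => [-> | -> | P_ge29].
- by apply: (@small_prime_growth 19 _ 60 27); [by [] | by [] | num_le | num_le | lia].
- by apply: (@small_prime_growth 23 _ 1 21); [by [] | by [] | num_le | num_le | lia].
- apply: large_prime_growth => //.
  have P_odd : odd P by case: (even_prime P_prime) P_ge29 => [->|].
  have P_ge1 : 1 <= INR P by apply/(le_INR 1)/leP/(leq_trans _ P_ge29).
  by have := INR_half_pred_succ P_odd; split; lra.
Qed.

Theorem corollary14 (p n : nat) :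
  prime p -> (19 <= p)%N -> (10 ^ 6 <= n)%N ->
  Rle (Rpower (INR p) (Rmult (Rdiv 782 1000) (INR n))) (INR (r3 p n)) /\
  Rle (pow (Rdiv (Rplus (INR p) 1) (Rdiv 20001 10000)) (n - 2)) (INR (r3 p n)).
Proof.
move=> p_prime p_ge19 n_large.
have p_odd : odd p by case: (even_prime p_prime) p_ge19 => [->|].
have n_gt0 : (0 < n)%N by apply: leq_trans n_large.
have hh_lt_p : (p.-1./2 + p.-1./2 < p)%N.
  by have := doubleS_half_pred p_odd; lia.
have /leP/le_INR := r3_ge_pow p_prime hh_lt_p n_gt0.
(* [INR_muln] also matches [h.+1 ^ 2], which unfolds to a product. *)
rewrite INR_expn 2!INR_muln INR_expn => r3_bound.
have m_def := INR_half_pred_succ p_odd.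
set m := INR (p.-1./2).+1 in m_def r3_bound *.
have m_pos : 0 < m by apply/lt_0_INR/ltP.
split.
- exact: (Rpower782_le_of_growth m_pos (prime_growth p_prime p_ge19 n_large) r3_bound).
- by apply: (pow_20001_le_of_growth _ m_pos n_large r3_bound); lra.
Qed.
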